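(* For every command $c$ and stores $\sigma,\sigma'$ of the While-language: $(c,\sigma)\Rightarrow_B\sigma'$ if and only if $(c,\sigma)\Downarrow\mathsf{conv}\ \sigma'$.
   Context: While-language syntax: variables $x$ range over a countably infinite set $\mathit{Var}$; $n$ ranges over natural numbers; values are $v ::= \mathsf{null}\mid n$ ($\mathsf{null}$ distinct from every natural number); expressions are $e ::= v\mid x\mid e_1\oplus e_2$ with $\oplus\in\{+,-,*\}$, where $\oplus(n_1,n_2)$ is the result of the operation on naturals; commands are $c ::= \mathsf{skip}\mid\mathsf{alloc}\ x\mid x:=e\mid c_1;c_2\mid \mathsf{if}\ e\ c_1\ c_2\mid\mathsf{while}\ e\ c$. A store $\sigma$ is a finite partial map from $\mathit{Var}$ to values, with domain $\mathrm{dom}(\sigma)$, lookup $\sigma(x)$, update $\sigma[x\mapsto v]$. Expression evaluation $(e,\sigma)\Rightarrow_E v$ is the least relation with: $(v,\sigma)\Rightarrow_E v$; $(x,\sigma)\Rightarrow_E\sigma(x)$ if $x\in\mathrm{dom}(\sigma)$; if $(e_1,\sigma)\Rightarrow_E n_1$ and $(e_2,\sigma)\Rightarrow_E n_2$ with $n_1,n_2$ naturals then $(e_1\oplus e_2,\sigma)\Rightarrow_E\oplus(n_1,n_2)$. Big-step relation $(c,\sigma)\Rightarrow_B\sigma'$ is the least relation with: $(\mathsf{skip},\sigma)\Rightarrow_B\sigma$; $(\mathsf{alloc}\ x,\sigma)\Rightarrow_B\sigma[x\mapsto\mathsf{null}]$ if $x\notin\mathrm{dom}(\sigma)$; $(x:=e,\sigma)\Rightarrow_B\sigma[x\mapsto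 v]$ if $x\in\mathrm{dom}(\sigma)$ and $(e,\sigma)\Rightarrow_E v$; $(c_1;c_2,\sigma)\Rightarrow_B\sigma''$ if $(c_1,\sigma)\Rightarrow_B\sigma'$ and $(c_2,\sigma')\Rightarrow_B\sigma''$; $(\mathsf{if}\ e\ c_1\ c_2,\sigma)\Rightarrow_B\sigma'$ if $(e,\sigma)\Rightarrow_E v$, $v\ne0$, $(c_1,\sigma)\Rightarrow_B\sigma'$; $(\mathsf{if}\ e\ c_1\ c_2,\sigma)\Rightarrow_B\sigma'$ if $(e,\sigma)\Rightarrow_E0$, $(c_2,\sigma)\Rightarrow_B\sigma'$; $(\mathsf{while}\ e\ c,\sigma)\Rightarrow_B\sigma''$ if $(e,\sigma)\Rightarrow_E v$, $v\ne0$, $(c,\sigma)\Rightarrow_B\sigma'$, $(\mathsf{while}\ e\ c,\sigma')\Rightarrow_B\sigma''$; $(\mathsf{while}\ e\ c,\sigma)\Rightarrow_B\sigma$ if $(e,\sigma)\Rightarrow_E0$. Pretty-big-step semantics: outcomes $o ::= \mathsf{conv}\ \sigma\mid\mathsf{div}$; semantic commands $C ::= c\mid\mathsf{assign2}\ x\ v\mid\mathsf{seq2}\ o\ c\mid\mathsf{if2}\ v\ c\ c\mid\mathsf{while2}\ v\ e\ c\mid\mathsf{while3}\ o\ e\ c$. The rules for $(C,\sigma)\Downarrow o$ are: $(\mathsf{skip},\sigma)\Downarrow\mathsf{conv}\ \sigma$; $(\mathsf{alloc}\ x,\sigma)\Downarrow\mathsf{conv}\ \sigma[x\mapsto\mathsf{null}]$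 if $x\notin\mathrm{dom}(\sigma)$; $(x:=e,\sigma)\Downarrow o$ if $(e,\sigma)\Rightarrow_E v$ and $(\mathsf{assign2}\ x\ v,\sigma)\Downarrow o$; $(\mathsf{assign2}\ x\ v,\sigma)\Downarrow\mathsf{conv}\ \sigma[x\mapsto v]$ if $x\in\mathrm{dom}(\sigma)$; $(c_1;c_2,\sigma)\Downarrow o$ if $(c_1,\sigma)\Downarrow o_1$ and $(\mathsf{seq2}\ o_1\ c_2,\sigma)\Downarrow o$; $(\mathsf{seq2}\ (\mathsf{conv}\ \sigma)\ c,\sigma_0)\Downarrow o$ if $(c,\sigma)\Downarrow o$; $(\mathsf{if}\ e\ c_1\ c_2,\sigma)\Downarrow o$ if $(e,\sigma)\Rightarrow_E v$ and $(\mathsf{if2}\ v\ c_1\ c_2,\sigma)\Downarrow o$; $(\mathsf{if2}\ v\ c_1\ c_2,\sigma)\Downarrow o_1$ if $v\ne0$ and $(c_1,\sigma)\Downarrow o_1$; $(\mathsf{if2}\ 0\ c_1\ c_2,\sigma)\Downarrow o_2$ if $(c_2,\sigma)\Downarrow o_2$; $(\mathsf{while}\ e\ c,\sigma)\Downarrow o$ if $(e,\sigma)\Rightarrow_E v$ and $(\mathsf{while2}\ v\ e\ c,\sigma)\Downarrow o$; $(\mathsf{while2}\ v\ e\ c,\sigma)\Downarrow o'$ if $v\ne0$, $(c,\sigma)\Downarrow o$ and $(\mathsf{while3}\ o\ e\ c,\sigma)\Downarrow o'$; $(\mathsf{while2}\ 0\ e\ c,\sigma)\Downarrow\mathsf{conv}\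 \sigma$; $(\mathsf{while3}\ (\mathsf{conv}\ \sigma)\ e\ c,\sigma_0)\Downarrow o$ if $(\mathsf{while}\ e\ c,\sigma)\Downarrow o$; $(\mathsf{seq2}\ \mathsf{div}\ c_2,\sigma)\Downarrow\mathsf{div}$; $(\mathsf{while3}\ \mathsf{div}\ e\ c,\sigma)\Downarrow\mathsf{div}$. The relation $\Downarrow$ is the inductive interpretation (least relation closed under these rules). *)

From HB Require Import structures.
From mathcomp Require Import all_boot.
From mathcomp Require Import finmap.
Set Implicit Arguments. Unset Strict Implicit.
Open Scope fmap_scope.

Definition var := nat.
Definition val := option nat.
Definition vnull : val := None.
Definition vnat (n : nat) : val := Some n.
Definition store := {fmap var -> val}.

Inductive binop := Plus | Minus | Mult.
Definition opfun (o : binop) : nat -> nat -> nat :=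
  match o with Plus => addn | Minus => subn | Mult => muln end.

Inductive expr :=
| EVal of val
| EVar of var
| EOp of binop & expr & expr.

Inductive cmd :=
| Skip
| Alloc of var
| Assign of var & expr
| Seq of cmd & cmd
| If of expr & cmd & cmd
| While of expr & cmd.

Definition upd (s : store) (x : var) (v : val) : store := s.[x <- v].

Inductive eval_expr : expr -> store -> val -> Prop :=
| E_Val v s : eval_expr (EVal v) s v
| E_Var x s (Hx : x \in domf s) : eval_expr (EVar x) s s.[Hx]
| E_Op o e1 e2 s n1 n2 :
    eval_expr e1 s (vnat n1) -> eval_expr e2 s (vnat n2) ->
    eval_expr (EOp o e1 e2) s (vnat (opfun o n1 n2)).

Inductive bigstep : cmd -> store -> store -> Prop :=
| B_Skip s : bigstep Skip s s
| B_Alloc x s : x \notin domf s -> bigstep (Alloc x) s (upd s x vnull)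
| B_Assign x e s v : x \in domf s -> eval_expr e s v ->
    bigstep (Assign x e) s (upd s x v)
| B_Seq c1 c2 s s' s'' : bigstep c1 s s' -> bigstep c2 s' s'' ->
    bigstep (Seq c1 c2) s s''
| B_IfT e c1 c2 s s' v : eval_expr e s v -> v <> vnat 0 -> bigstep c1 s s' ->
    bigstep (If e c1 c2) s s'
| B_IfF e c1 c2 s s' : eval_expr e s (vnat 0) -> bigstep c2 s s' ->
    bigstep (If e c1 c2) s s'
| B_WhileT e c s s' s'' v : eval_expr e s v -> v <> vnat 0 -> bigstep c s s' ->
    bigstep (While e c) s' s'' -> bigstep (While e c) s s''
| B_WhileF e c s : eval_expr e s (vnat 0) -> bigstep (While e c) s s.

Inductive outcome := Conv of store | Div.

Inductive scmd :=
| SC of cmd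
| SAssign2 of var & val
| SSeq2 of outcome & cmd
| SIf2 of val & cmd & cmd
| SWhile2 of val & expr & cmd
| SWhile3 of outcome & expr & cmd.

Inductive pbs : scmd -> store -> outcome -> Prop :=
| P_Skip s : pbs (SC Skip) s (Conv s)
| P_Alloc x s : x \notin domf s -> pbs (SC (Alloc x)) s (Conv (upd s x vnull))
| P_Assign x e s v o : eval_expr e s v -> pbs (SAssign2 x v) s o ->
    pbs (SC (Assign x e)) s o
| P_Assign2 x v s : x \in domf s -> pbs (SAssign2 x v) s (Conv (upd s x v))
| P_Seq c1 c2 s o1 o : pbs (SC c1) s o1 -> pbs (SSeq2 o1 c2) s o ->
    pbs (SC (Seq c1 c2)) s o
| P_Seq2 s c s0 o : pbs (SC c) s o -> pbs (SSeq2 (Conv s) c) s0 o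
| P_If e c1 c2 s v o : eval_expr e s v -> pbs (SIf2 v c1 c2) s o ->
    pbs (SC (If e c1 c2)) s o
| P_If2T v c1 c2 s o1 : v <> vnat 0 -> pbs (SC c1) s o1 -> pbs (SIf2 v c1 c2) s o1
| P_If2F c1 c2 s o2 : pbs (SC c2) s o2 -> pbs (SIf2 (vnat 0) c1 c2) s o2
| P_While e c s v o : eval_expr e s v -> pbs (SWhile2 v e c) s o ->
    pbs (SC (While e c)) s o
| P_While2T v e c s o o' : v <> vnat 0 -> pbs (SC c) s o ->
    pbs (SWhile3 o e c) s o' -> pbs (SWhile2 v e c) s o'
| P_While2F e c s : pbs (SWhile2 (vnat 0) e c) s (Conv s)
| P_While3 s e c s0 o : pbs (SC (While e c)) s o -> pbs (SWhile3 (Conv s) e c) s0 o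
| P_Seq2Div c2 s : pbs (SSeq2 Div c2) s Div
| P_While3Div e c s : pbs (SWhile3 Div e c) s Div.

From mathcomp Require Import ssreflect ssrfun.

(* Big-step derivations translate rule by rule into pretty-big-step ones.
   Conversely, induct on pretty-big-step derivations ending in [Conv s'] with
   an invariant giving each intermediate command a big-step meaning: a command
   carrying a value [v] stands for the source command with any expression
   evaluating to [v], and one carrying an outcome stands for the rest of the
   computation from that outcome, which cannot be [Div] because [Div] only
   propagates to [Div]. *)

Definition scmd_bigstep (C : scmd) (s s' : store) : Prop :=
  match C with
  | SC c => bigstep c s s'
  | SAssign2 x v => forall e, eval_expr e s v -> bigstep (Assign x e) s s'
  | SSeq2 o c => exists2 s1, o = Conv s1 & bigstep c s1 s'
  | SIf2 v c1 c2 => forall e, eval_expr e s v -> bigstep (If e c1 c2) s s'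
  | SWhile2 v e c => eval_expr e s v -> bigstep (While e c) s s'
  | SWhile3 o e c => exists2 s1, o = Conv s1 & bigstep (While e c) s1 s'
  end.

Lemma bigstep_pbs c s s' : bigstep c s s' -> pbs (SC c) s (Conv s').
Proof.
elim=> {c s s'}.
- by move=> s; apply: P_Skip.
- by move=> x s Hx; apply: P_Alloc.
- by move=> x e s v Hx He; apply: P_Assign He (P_Assign2 _ Hx).
- by move=> c1 c2 s s' s'' _ H1 _ H2; apply: P_Seq H1 (P_Seq2 _ H2).
- by move=> e c1 c2 s s' v He Hv _ H1; apply: P_If He (P_If2T _ Hv H1).
- by move=> e c1 c2 s s' He _ H2; apply: P_If He (P_If2F _ H2).
- move=> e c s s' s'' v He Hv _ Hc _ Hw.
  by apply: P_While He (P_While2T Hv Hc (P_While3 _ Hw)).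
- by move=> e c s He; apply: P_While He (P_While2F _ _ _).
Qed.

Lemma pbs_SSeq2_Div c s o : pbs (SSeq2 Div c) s o -> o = Div.
Proof. by move=> H; inversion H. Qed.

Lemma pbs_SWhile3_Div e c s o : pbs (SWhile3 Div e c) s o -> o = Div.
Proof. by move=> H; inversion H. Qed.

Lemma pbs_scmd_bigstep C s o : pbs C s o ->
  forall s', o = Conv s' -> scmd_bigstep C s s'.
Proof.
elim=> {C s o} /=.
- by move=> s _ [<-]; apply: B_Skip.
- by move=> x s Hx _ [<-]; apply: B_Alloc.
- by move=> x e s v o He _ IH s' Ho; apply: IH Ho _ He.
- by move=> x v s Hx _ [<-] e He; apply: B_Assign.
- move=> c1 c2 s o1 o _ IH1 H2 IH2 s' Ho.
  case: o1 H2 IH1 IH2 => [s1 | /pbs_SSeq2_Div]; last by rewrite Ho.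
  move=> _ IH1 IH2; have [_ [<-] Hc2] := IH2 _ Ho.
  by apply: B_Seq (IH1 _ erefl) Hc2.
- by move=> s c s0 o _ IH s' Ho; exists s => //; apply: IH.
- by move=> e c1 c2 s v o He _ IH s' Ho; apply: IH Ho _ He.
- by move=> v c1 c2 s o Hv _ IH s' Ho e He; apply: B_IfT He Hv (IH _ Ho).
- by move=> c1 c2 s o _ IH s' Ho e He; apply: B_IfF He (IH _ Ho).
- by move=> e c s v o He _ IH s' Ho; apply: IH Ho He.
- move=> v e c s o o' Hv _ IHc H3 IH3 s' Ho He.
  case: o H3 IHc IH3 => [s1 | /pbs_SWhile3_Div]; last by rewrite Ho.
  move=> _ IHc IH3; have [_ [<-] Hw] := IH3 _ Ho.
  by apply: B_WhileT He Hv (IHc _ erefl) Hw.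
- by move=> e c s s' [<-] He; apply: B_WhileF.
- by move=> s e c s0 o _ IH s' Ho; exists s => //; apply: IH.
- by [].
- by [].
Qed.

Theorem theorem12 (c : cmd) (s s' : store) :
  bigstep c s s' <-> pbs (SC c) s (Conv s').
Proof.
split; first exact: bigstep_pbs.
by move=> H; exact: pbs_scmd_bigstep H s' erefl.
Qed.
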